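(* Let $\lambda_1,\lambda_2,\sigma_1,\sigma_2\in\mathbb{C}^*$ and $\eta_1,\eta_2\in\mathbb{C}$. Then $\Omega(\lambda_1,\eta_1,0,\sigma_1)\otimes\Omega(\lambda_2,\eta_2,0,\sigma_2)$ is an irreducible $\mathcal{G}$-module if and only if $\lambda_1\neq\lambda_2$.
   Context: The planar Galilean conformal algebra $\mathcal{G}$ is the complex Lie algebra with basis $\{L_m,H_m,I_m,J_m\mid m\in\mathbb{Z}\}$ and brackets $[L_m,L_n]=(n-m)L_{m+n}$, $[L_m,H_n]=nH_{m+n}$, $[L_m,I_n]=(n-m)I_{m+n}$, $[L_m,J_n]=(n-m)J_{m+n}$, $[H_m,I_n]=I_{m+n}$, $[H_m,J_n]=-J_{m+n}$, and $[H_m,H_n]=[I_m,I_n]=[J_m,J_n]=[I_m,J_n]=0$ for all $m,n\in\mathbb{Z}$. For $\lambda,\sigma\in\mathbb{C}^*$, $\eta\in\mathbb{C}$, the module $\Omega(\lambda,\eta,0,\sigma)$ is $\mathbb{C}[S,T]$ with $L_m f(S,T)=\lambda^m(T+mS+m\eta)f(S,T-m)$, $H_m f(S,T)=\lambda^m S f(S,T-m)$, $I_m f(S,T)=0$, $J_m f(S,T)=\lambda^m\sigma f(S+1,T-m)$. The tensor product of $\mathcal{G}$-modules has action $x(v\otimes w)=xv\otimes w+v\otimes xw$. *)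

(* The field of complex numbers is R[i] for an
   arbitrary R : realType (any realType is the field of real numbers). *)
From HB Require Import structures.
From mathcomp Require Import all_boot all_algebra.
From mathcomp Require Import reals.
From mathcomp Require Import complex.
From mathcomp Require Import mpoly.

Set Implicit Arguments.
Unset Strict Implicit.
Unset Printing Implicit Defensive.

Import GRing.Theory Num.Theory.
Local Open Scope ring_scope.

(* Basis of the planar Galilean conformal algebra G:
   L_m, H_m, I_m, J_m  (m in Z). *)
Inductive gbasis : Type :=
  | GL of int | GH of int | GI of int | GJ of int.

(* A G-module structure on a C-vector space V is given by the action of the
   basis elements (extended linearly to all of G). *)

Definition is_submodule (C : fieldType) (V : lmodType C)
  (act : gbasis -> V -> V) (W : V -> Prop) : Prop :=
  [/\ W 0,
      (forall u v, W u -> W v -> W (u + v)),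
      (forall (c : C) v, W v -> W (c *: v)) &
      (forall x v, W v -> W (act x v))].

Definition irreducible_module (C : fieldType) (V : lmodType C)
  (act : gbasis -> V -> V) : Prop :=
  (exists v : V, v != 0) /\
  forall W : V -> Prop, is_submodule act W ->
    (exists v, W v /\ v != 0) -> forall v, W v.

Section Omega.
Variable R : realType.
Local Notation C := (R[i]).

Definition shift_subst (k : nat) (s t : 'I_k) (a b : C) (f : {mpoly C[k]})
  : {mpoly C[k]} :=
  f \mPo [tuple (if i == t then 'X_i + b%:MP
                 else if i == s then 'X_i + a%:MP
                 else 'X_i) | i < k].

(* The action of Omega(lam, eta, 0, sig) = C[S,T], where S = X_s, T = X_t are
   two distinct variables of C[X_0..X_{k-1}] and the remaining variables are
   treated as scalars (i.e. this is the action x (x) id on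
   C[S,T] (x) C[other variables]):
     L_m f(S,T) = lam^m (T + m S + m eta) f(S, T - m)
     H_m f(S,T) = lam^m S f(S, T - m)
     I_m f(S,T) = 0
     J_m f(S,T) = lam^m sig f(S + 1, T - m). *)
Definition omega_act_on (k : nat) (s t : 'I_k) (lam eta sig : C)
  (x : gbasis) (f : {mpoly C[k]}) : {mpoly C[k]} :=
  match x with
  | GL m => lam ^ m *: (('X_t + (m%:~R : C) *: 'X_s + (m%:~R * eta)%:MP)
                         * shift_subst s t 0 (- m%:~R) f)
  | GH m => lam ^ m *: ('X_s * shift_subst s t 0 (- m%:~R) f)
  | GI m => 0
  | GJ m => (lam ^ m * sig) *: shift_subst s t 1 (- m%:~R) f
  end.

Definition Omega_act (lam eta sig : C) : gbasis -> {mpoly C[2]} -> {mpoly C[2]} :=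
  omega_act_on (0 : 'I_2) (1 : 'I_2) lam eta sig.

(* The tensor product Omega(lam1,eta1,0,sig1) (x) Omega(lam2,eta2,0,sig2),
   realised as C[S1,T1] (x) C[S2,T2] = C[S1,T1,S2,T2] = {mpoly C[4]}
   (f(S1,T1) (x) g(S2,T2) <-> f(S1,T1) g(S2,T2)), with
   S1 = X_0, T1 = X_1, S2 = X_2, T2 = X_3 and the action
   x (v (x) w) = x v (x) w + v (x) x w. *)
Definition tensor_Omega_act (lam1 eta1 sig1 lam2 eta2 sig2 : C)
  (x : gbasis) (F : {mpoly C[4]}) : {mpoly C[4]} :=
  omega_act_on (0 : 'I_4) (1 : 'I_4) lam1 eta1 sig1 x F
  + omega_act_on (2 : 'I_4) (3 : 'I_4) lam2 eta2 sig2 x F.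

End Omega.

From HB Require Import structures.
From mathcomp Require Import all_boot all_algebra.
From mathcomp Require Import reals.
From mathcomp Require Import complex.
From mathcomp Require Import mpoly.
From mathcomp Require Import ring.

(* If lam1 != lam2, let W be a nonzero submodule and F in W.  For x in {L, H, J},
   x_m F = lam1^m a_m + lam2^m b_m, where a_m and b_m are the actions of the two
   tensor factors normalised to lam = 1; both are polynomial in m, and a
   Vandermonde-type argument on finite differences puts every a_m and b_m in W.
   So W is stable under multiplication by S_i, T_i (it is an ideal) and under the
   translations (S_i, T_i) -> (S_i + 1, T_i - m) coming from J_m.  These
   translations minus the identity are commuting nilpotent operators, so W contains
   a nonzero polynomial fixed by all of them; being invariant under all integer
   translations it is a nonzero constant, hence 1 is in W and W is everything.
   If lam1 = lam2, the polynomials depending only on S1 + S2 and T1 + T2 form a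
   nonzero proper submodule. *)

Set Implicit Arguments.
Unset Strict Implicit.
Unset Printing Implicit Defensive.

Import GRing.Theory Num.Theory.
Local Open Scope ring_scope.

Lemma subrACA (V : zmodType) (a b c d : V) : (a - b) - (c - d) = (a - c) - (b - d).
Proof. by rewrite opprD addrACA -opprD. Qed.

Section FiniteDifferences.
Variable V : zmodType.
Implicit Types (a b : nat -> V) (x : V).

Definition fdiff a : nat -> V := fun m => a m.+1 - a m.

Definition poly_seq a := exists d, forall m, iter d fdiff a m = 0.

Lemma iter_fdiff_ext d a b : a =1 b -> iter d fdiff a =1 iter d fdiff b.
Proof. by move=> eq_ab; elim: d => //= d IH m; rewrite /fdiff !IH. Qed.

Lemma iter_fdiff_shift d a m :
  iter d fdiff (fun k => a k.+1) m = iter d fdiff a m.+1.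
Proof. by elim: d m => //= d IH m; rewrite /fdiff !IH. Qed.

Lemma iter_fdiffD d a b m :
  iter d fdiff (fun k => a k + b k) m = iter d fdiff a m + iter d fdiff b m.
Proof. by elim: d m => //= d IH m; rewrite /fdiff !IH opprD addrACA. Qed.

Lemma iter_fdiff0 d m : iter d fdiff (fun=> 0 : V) m = 0.
Proof. by elim: d m => //= d IH m; rewrite /fdiff !IH subrr. Qed.

Lemma iter_fdiff_eq0 d a : (forall m, a m = 0) -> forall m, iter d fdiff a m = 0.
Proof. by move=> a0 m; rewrite (iter_fdiff_ext _ a0) iter_fdiff0. Qed.

Lemma iter_fdiff_eq0_ge d e a : (d <= e)%N ->
  (forall m, iter d fdiff a m = 0) -> forall m, iter e fdiff a m = 0.
Proof. by move=> /subnK <- a0 m; rewrite iterD; apply: iter_fdiff_eq0. Qed.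

Lemma poly_seq_ext a b : a =1 b -> poly_seq a -> poly_seq b.
Proof. by move=> eq_ab [d a0]; exists d => m; rewrite -(iter_fdiff_ext _ eq_ab). Qed.

Lemma poly_seq_const x : poly_seq (fun=> x).
Proof. by exists 1%N => m; rewrite /= /fdiff subrr. Qed.

Lemma poly_seq_natmul x : poly_seq (fun m => x *+ m).
Proof.
have step m : fdiff (fun k => x *+ k) m = x by rewrite /fdiff mulrS addrK.
by exists 2%N => m; rewrite iterSr (iter_fdiff_ext 1 step) /= /fdiff subrr.
Qed.

Lemma poly_seq_shift a : poly_seq a -> poly_seq (fun m => a m.+1).
Proof. by move=> [d a0]; exists d => m; rewrite iter_fdiff_shift. Qed.

Lemma poly_seqD a b : poly_seq a -> poly_seq b -> poly_seq (fun m => a m + b m).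
Proof.
move=> [d a0] [e b0]; exists (maxn d e) => m.
by rewrite iter_fdiffD (iter_fdiff_eq0_ge (leq_maxl d e) a0)
  (iter_fdiff_eq0_ge (leq_maxr d e) b0) addr0.
Qed.

Lemma poly_seq_sum (I : Type) (r : seq I) (P : pred I) (F : I -> nat -> V) :
  (forall i, poly_seq (F i)) -> poly_seq (fun m => \sum_(i <- r | P i) F i m).
Proof.
move=> polyF; elim: r => [|i r IH].
  by apply: poly_seq_ext (poly_seq_const 0) => m; rewrite big_nil.
case Pi: (P i); last by apply: poly_seq_ext IH => m; rewrite big_cons Pi.
by apply: poly_seq_ext (poly_seqD (polyF i) IH) => m; rewrite big_cons Pi.
Qed.

End FiniteDifferences.
Arguments fdiff {V}.
Arguments poly_seq {V}.

Lemma iter_fdiff_morph (V V' : zmodType) (f : V -> V') :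
  {morph f : x y / x - y} -> forall d (a : nat -> V) m,
  iter d fdiff (fun k => f (a k)) m = f (iter d fdiff a m).
Proof. by move=> fB; elim=> //= d IH a m; rewrite /fdiff !IH fB. Qed.

Lemma poly_seq_morph (V V' : zmodType) (f : V -> V') (a : nat -> V) :
  {morph f : x y / x - y} -> poly_seq a -> poly_seq (fun m => f (a m)).
Proof.
move=> fB [d a0]; exists d => m.
by rewrite iter_fdiff_morph // a0 -(subrr 0) fB subrr.
Qed.

Lemma iter_fdiff_orbit (V : zmodType) (f : V -> V) (a : nat -> V) :
  {morph f : x y / x - y} -> (forall m, a m.+1 = f (a m)) ->
  forall d m, iter d fdiff a m = iter d (fun x => f x - x) (a m).
Proof.
move=> fB a_orbit; pose g x := f x - x.
have gB : {morph g : x y / x - y}.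
  by move=> x y; rewrite /g fB subrACA.
have iter_gB k : {morph iter k g : x y / x - y}.
  by elim: k => // k IH x y; rewrite !iterS IH gB.
elim=> // d IH m; rewrite [LHS]/= /fdiff !IH a_orbit -iter_gB.
by rewrite -[f (a m) - a m]/(g (a m)) -iterSr.
Qed.

Section PolySeqRing.
Variable V : comNzRingType.
Implicit Types a b : nat -> V.

Lemma fdiffM a b m : fdiff (fun k => a k * b k) m = fdiff a m * b m.+1 + a m * fdiff b m.
Proof. by rewrite /fdiff mulrBl mulrBr addrA subrK. Qed.

Lemma iter_fdiffM_eq0 d e a b :
  (forall m, iter d fdiff a m = 0) -> (forall m, iter e fdiff b m = 0) ->
  forall m, iter (d + e) fdiff (fun k => a k * b k) m = 0.
Proof.
elim: d e a b => [|d IHd] e a b a0 b0.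
  by apply: iter_fdiff_eq0 => m; have /= -> := a0 m; rewrite mul0r.
elim: e b b0 => [|e IHe] b b0.
  by apply: iter_fdiff_eq0 => m; have /= -> := b0 m; rewrite mulr0.
move=> m; rewrite addnS iterSr (iter_fdiff_ext _ (fdiffM a b)) iter_fdiffD.
rewrite {1}addSnnS (IHd e.+1) ?IHe ?addr0 // => k.
- by rewrite -iterSr.
- by rewrite -iterSr.
- by rewrite iter_fdiff_shift.
Qed.

Lemma poly_seqM a b : poly_seq a -> poly_seq b -> poly_seq (fun m => a m * b m).
Proof. by move=> [d a0] [e b0]; exists (d + e)%N; apply: iter_fdiffM_eq0. Qed.

Lemma poly_seqX a k : poly_seq a -> poly_seq (fun m => a m ^+ k).
Proof.
move=> pa; elim: k => [|k IH].
  by apply: poly_seq_ext (poly_seq_const 1) => m; rewrite expr0.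
by apply: poly_seq_ext (poly_seqM pa IH) => m; rewrite exprS.
Qed.

Lemma poly_seq_prod (I : Type) (r : seq I) (P : pred I) (F : I -> nat -> V) :
  (forall i, poly_seq (F i)) -> poly_seq (fun m => \prod_(i <- r | P i) F i m).
Proof.
move=> polyF; elim: r => [|i r IH].
  by apply: poly_seq_ext (poly_seq_const 1) => m; rewrite big_nil.
case Pi: (P i); last by apply: poly_seq_ext IH => m; rewrite big_cons Pi.
by apply: poly_seq_ext (poly_seqM (polyF i) IH) => m; rewrite big_cons Pi.
Qed.

End PolySeqRing.

Section Separation.
Variables (K : fieldType) (V : lmodType K) (W : V -> Prop).
Hypotheses (W0 : W 0) (WD : forall u v, W u -> W v -> W (u + v))
  (WZ : forall c v, W v -> W (c *: v)).
Variables l1 l2 : K.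
Hypothesis l12 : l1 != l2.

Lemma subspaceB u v : W u -> W v -> W (u - v).
Proof. by move=> Wu Wv; rewrite -scaleN1r; apply/WD/WZ. Qed.

Lemma twisted_fdiff_mem d (a : nat -> V) : (forall m, iter d fdiff a m = 0) ->
  (forall m, W (l1 *: a m.+1 - l2 *: a m)) -> forall m, W (a m).
Proof.
elim: d a => [|d IH] a a0 Wa m; first by have /= -> := a0 m.
have Wda : forall m, W (fdiff a m).
  apply: IH => [k|k]; first by rewrite -iterSr.
  have -> : l1 *: fdiff a k.+1 - l2 *: fdiff a k =
      (l1 *: a k.+2 - l2 *: a k.+1) - (l1 *: a k.+1 - l2 *: a k).
    by rewrite /fdiff !scalerBr subrACA.
  exact/subspaceB/Wa/Wa.
have e : (l1 *: a m.+1 - l2 *: a m) - l1 *: fdiff a m = (l1 - l2) *: a m.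
  by rewrite /fdiff scalerBr opprB addrC addrA subrK scalerBl.
have l12' : l1 - l2 != 0 by rewrite subr_eq0.
rewrite -[a m]scale1r -(mulVf l12') -scalerA -e.
exact/WZ/subspaceB/WZ/Wda/Wa.
Qed.

Hypothesis l1_neq0 : l1 != 0.

Lemma exp_poly_sum_meml e (a b : nat -> V) : poly_seq a ->
  (forall m, iter e fdiff b m = 0) ->
  (forall m, W (l1 ^+ m *: a m + l2 ^+ m *: b m)) -> forall m, W (a m).
Proof.
elim: e a b => [|e IH] a b pa b0 Wab m.
  have := WZ (l1 ^+ m)^-1 (Wab m); have /= -> := b0 m.
  by rewrite scaler0 addr0 scalerA mulVf ?expf_neq0 ?scale1r.
have [d a0] := pa.
apply: (twisted_fdiff_mem a0) => {}m.
rewrite -scaleNr.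
(* c_k := l1^k a_k + l2^k b_k gives c_(k+1) - l2 c_k = l1^k a'_k + l2^k b'_k,
   where b' has lower degree than b. *)
pose a' k := l1 *: a k.+1 + - l2 *: a k.
pose b' k := l2 *: fdiff b k.
apply: (IH a' b') => [|k|k].
- apply: poly_seqD; first exact/(poly_seq_morph (scalerBr l1))/poly_seq_shift.
  exact: (poly_seq_morph (scalerBr (- l2))).
- by rewrite iter_fdiff_morph; [rewrite -iterSr b0 scaler0 | exact: scalerBr].
- have -> : l1 ^+ k *: (l1 *: a k.+1 + - l2 *: a k) + l2 ^+ k *: b' k =
      (l1 ^+ k.+1 *: a k.+1 + l2 ^+ k.+1 *: b k.+1)
      - l2 *: (l1 ^+ k *: a k + l2 ^+ k *: b k).
    rewrite /b' /fdiff /= !scalerDr !scalerN !scalerA mulrN scaleNr !exprSr.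
    by rewrite (mulrC l2 (l1 ^+ k)) (mulrC l2 (l2 ^+ k)) opprD addrACA.
  exact/subspaceB/WZ/Wab/Wab.
Qed.

End Separation.

Lemma exp_poly_sum_mem (K : fieldType) (V : lmodType K) (W : V -> Prop)
    (l1 l2 : K) (a b : nat -> V) :
  W 0 -> (forall u v, W u -> W v -> W (u + v)) -> (forall c v, W v -> W (c *: v)) ->
  l1 != 0 -> l2 != 0 -> l1 != l2 -> poly_seq a -> poly_seq b ->
  (forall m, W (l1 ^+ m *: a m + l2 ^+ m *: b m)) ->
  (forall m, W (a m)) /\ (forall m, W (b m)).
Proof.
move=> W0 WD WZ l1_neq0 l2_neq0 l12 pa pb Wab.
have [[d a0] [e b0]] := (pa, pb).
split; first exact: (exp_poly_sum_meml W0 WD WZ l12 l1_neq0 pa b0 Wab).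
have l21 : l2 != l1 by rewrite eq_sym.
by apply: (exp_poly_sum_meml W0 WD WZ l21 l2_neq0 pb a0) => m; rewrite addrC.
Qed.

Lemma comp_mpolyA (K : comNzRingType) n k l (F : {mpoly K[n]})
    (lq : n.-tuple {mpoly K[k]}) (lr : k.-tuple {mpoly K[l]}) :
  (F \mPo lq) \mPo lr = F \mPo [tuple tnth lq i \mPo lr | i < n].
Proof.
rewrite [F \mPo lq]comp_mpolyE [RHS]comp_mpolyE raddf_sum.
apply: eq_bigr => m _; rewrite /= comp_mpolyZ rmorph_prod; congr (_ *: _).
by apply: eq_bigr => i _; rewrite rmorphXn tnth_mktuple.
Qed.

Lemma poly_seq_comp_mpoly (K : comNzRingType) n k (F : {mpoly K[n]})
    (lq : nat -> n.-tuple {mpoly K[k]}) :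
  (forall i, poly_seq (fun m => tnth (lq m) i)) -> poly_seq (fun m => F \mPo lq m).
Proof.
move=> poly_lq; apply: (@poly_seq_ext _ (fun m => \sum_(mm <- msupp F)
    F@_mm *: \prod_(i < n) tnth (lq m) i ^+ mm i)) => [m|].
  by rewrite comp_mpolyE.
apply: poly_seq_sum => mm; apply: poly_seq_morph; first exact: scalerBr.
by apply: poly_seq_prod => i; apply: poly_seqX.
Qed.

Section MpolyShift.
Variables (K : comNzRingType) (n : nat).
Implicit Types (F G : {mpoly K[n]}) (c : {ffun 'I_n -> K}).

Definition mshift c F := F \mPo [tuple 'X_i + (c i)%:MP | i < n].

Lemma mshiftB c : {morph mshift c : F G / F - G}.
Proof. exact: comp_mpolyB. Qed.

Lemma mshift0 F : mshift 0 F = F.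
Proof.
rewrite /mshift -[RHS]comp_mpoly_id; congr comp_mpoly.
by apply: eq_from_tnth => i; rewrite !tnth_mktuple ffunE addr0.
Qed.

Lemma mshift_comp c c' F : mshift c (mshift c' F) = mshift (c + c') F.
Proof.
rewrite /mshift comp_mpolyA; congr comp_mpoly; apply: eq_from_tnth => i.
rewrite !tnth_mktuple rmorphD /= comp_mpolyC comp_mpolyXU -tnth_nth.
by rewrite tnth_mktuple ffunE mpolyCD addrA.
Qed.

Lemma meval_mshift c F v : (mshift c F).@[v] = F.@[fun i => v i + c i].
Proof.
rewrite comp_mpoly_meval; apply: meval_eq => i.
by rewrite tnth_mktuple mevalD mevalXU mevalC.
Qed.

Lemma poly_seq_mshift (c : nat -> {ffun 'I_n -> K}) F :
  (forall i, poly_seq (fun m => c m i)) -> poly_seq (fun m => mshift (c m) F).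
Proof.
move=> poly_c; apply: poly_seq_comp_mpoly => i.
apply: (@poly_seq_ext _ (fun m => 'X_i + (c m i)%:MP)) => [m|].
  by rewrite tnth_mktuple.
apply/poly_seqD/(poly_seq_morph (@mpolyCB _ _))/poly_c; exact: poly_seq_const.
Qed.

Lemma mshift_sub_nilpotent c F : exists d, iter d (fun G => mshift c G - G) F = 0.
Proof.
have [d a0] : poly_seq (fun m => mshift (c *+ m) F).
  apply: poly_seq_mshift => i.
  by apply: poly_seq_ext (poly_seq_natmul (c i)) => m; rewrite ffunMnE.
exists d; rewrite -[F in iter _ _ F]mshift0 -(mulr0n c) -(a0 0%N).
by rewrite (iter_fdiff_orbit (mshiftB c)) // => m; rewrite mshift_comp mulrS.
Qed.

Lemma mshift_sub_comm c c' F :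
  mshift c (mshift c' F - F) - (mshift c' F - F) =
  mshift c' (mshift c F - F) - (mshift c F - F).
Proof. by rewrite !mshiftB !mshift_comp [c' + c]addrC subrACA. Qed.

Lemma mshift_fixedN c G : mshift c G = G -> mshift (- c) G = G.
Proof. by move=> fixG; rewrite -{1}fixG mshift_comp addNr mshift0. Qed.

Lemma mshift_fixedD c c' G : mshift c G = G -> mshift c' G = G -> mshift (c + c') G = G.
Proof. by move=> fixc fixc'; rewrite -mshift_comp fixc' fixc. Qed.

Lemma mshift_fixed_nat G : (forall j, mshift [ffun i => (i == j)%:R] G = G) ->
  forall k : 'I_n -> nat, mshift [ffun i => (k i)%:R] G = G.
Proof.
move=> fix_unit k.
have -> : [ffun i => (k i)%:R] =
    \sum_j [ffun i => (i == j)%:R] *+ k j :> {ffun 'I_n -> K}.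
  apply/ffunP => i; rewrite sum_ffunE (bigD1 i) //= big1 => [|j /negbTE ji].
    by rewrite ffunMnE !ffunE eqxx addr0.
  by rewrite ffunMnE ffunE eq_sym ji mul0rn.
apply: (big_ind (fun c => mshift c G = G)) => [|c c'|j _]; first exact: mshift0.
  exact: mshift_fixedD.
elim: (k j) => [|m IH]; first by rewrite mulr0n mshift0.
by rewrite mulrSr mshift_fixedD.
Qed.

End MpolyShift.

Definition rcons_vec (T : Type) n (v : 'I_n -> T) (x : T) (i : 'I_n.+1) : T :=
  odflt x (omap v (unlift ord_max i)).

Section NatZeros.
Variable K : numDomainType.

Lemma widen_lift_max n (i : 'I_n) : widen_ord (leqnSn n) i = lift ord_max i.
Proof. exact/val_inj/esym/lift_max. Qed.

Lemma muni_coef n (F : {mpoly K[n.+1]}) (m : 'X_{1..n.+1}) :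
  ((muni F)`_(m ord_max))@_[multinom m (widen_ord (leqnSn n) i) | i < n] = F@_m.
Proof.
rewrite {2}[F]mpolyE muniE coef_sum !raddf_sum /=; apply: eq_bigr => mm _.
rewrite coefZ coefXn mcoeffZ mcoeffX mulr_natr mcoeffMn mcoeffZ mcoeffX.
have -> : (mm == m) = ([multinom mm (widen_ord (leqnSn n) i) | i < n]
    == [multinom m (widen_ord (leqnSn n) i) | i < n]) && (m ord_max == mm ord_max).
  apply/eqP/andP => [->|[/eqP/mnmP eq_mm /eqP eq_max]]; first by rewrite !eqxx.
  apply/mnmP => i; case: (unliftP ord_max i) => [j ->|->] //.
  by have := eq_mm j; rewrite !mnmE widen_lift_max.
by case: (_ == _); case: (_ == _); rewrite ?mulr1n ?mulr0n ?mulr0.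
Qed.

Lemma muni_meval n (F : {mpoly K[n.+1]}) (v : 'I_n -> K) x :
  (map_poly (meval v) (muni F)).[x] = F.@[rcons_vec v x].
Proof.
rewrite muniE mevalE rmorph_sum horner_sum; apply: eq_bigr => mm _.
rewrite /= map_polyZ map_polyXn hornerZ hornerXn /= mevalZ mevalX.
rewrite big_ord_recr /= /rcons_vec unlift_none /= -mulrA; congr (_ * (_ * _)).
by apply: eq_bigr => i _; rewrite mnmE widen_lift_max liftK.
Qed.

Lemma mpoly_nat_zeros_eq0 n (F : {mpoly K[n]}) :
  (forall k : 'I_n -> nat, F.@[fun i => (k i)%:R] = 0) -> F = 0.
Proof.
elim: n F => [|n IH] F F0.
  by have := F0 (fun=> 0%N); rewrite [F]nvar0_mpolyC mevalC => ->; rewrite mpolyC0.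
suff muni0 k : (muni F)`_k = 0.
  by apply/mpolyP => m; rewrite mcoeff0 -muni_coef muni0 mcoeff0.
apply: IH => v; rewrite -coef_map; set p := map_poly _ _.
suff -> : p = 0 by rewrite coef0.
apply: (@roots_geq_poly_eq0 _ _ [seq (j%:R : K) | j <- iota 0 (size p)]).
- apply/allP => _ /mapP[j _ ->]; rewrite /root muni_meval.
  by rewrite -(F0 (rcons_vec v j)); apply/eqP/meval_eq => i; rewrite /rcons_vec; case: unlift.
- by rewrite map_inj_uniq ?iota_uniq // => a b /eqP; rewrite eqr_nat => /eqP.
- by rewrite size_map size_iota.
Qed.

Lemma mshift_fixed_const n (G : {mpoly K[n]}) :
  (forall j, mshift [ffun i => (i == j)%:R] G = G) -> G = (G.@[fun=> 0])%:MP.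
Proof.
move=> fix_unit; apply/eqP; rewrite -subr_eq0; apply/eqP/mpoly_nat_zeros_eq0 => k.
apply/eqP; rewrite mevalB mevalC subr_eq0; apply/eqP.
rewrite -[in RHS](mshift_fixed_nat fix_unit k) meval_mshift.
by apply: meval_eq => i; rewrite ffunE add0r.
Qed.

End NatZeros.

Lemma iter_last_neq0 (V : zmodType) (f : V -> V) (x : V) d :
  x != 0 -> iter d f x = 0 -> exists k, iter k f x != 0 /\ f (iter k f x) = 0.
Proof.
move=> x_neq0; elim: d => [/eqP|d IH /= fd0]; first by rewrite (negbTE x_neq0).
by have [/IH|] := eqVneq (iter d f x) 0; last exists d.
Qed.

Section CommonKernel.
Variables (V : zmodType) (W : V -> Prop) (I : eqType) (N : I -> V -> V).
Hypotheses (N0 : forall i, N i 0 = 0) (N_comm : forall i j x, N i (N j x) = N j (N i x))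
  (N_nilpotent : forall i x, exists d, iter d (N i) x = 0).

Lemma common_kernel (r : seq I) x : {in r, forall i y, W y -> W (N i y)} ->
  W x -> x != 0 -> exists y, [/\ W y, y != 0 & {in r, forall i, N i y = 0}].
Proof.
move=> + Wx x_neq0; elim: r => [|i r IH] WN; first by exists x.
have [y [Wy y_neq0 Ny0]] : exists y, [/\ W y, y != 0 & {in r, forall i, N i y = 0}].
  by apply: IH => j jr; apply: WN; rewrite inE jr orbT.
have [d Nd0] := N_nilpotent i y.
have [k [Nky_neq0 NNky0]] := iter_last_neq0 y_neq0 Nd0.
exists (iter k (N i) y); split => // [|j].
  by elim: k {Nky_neq0 NNky0} => //= k IH'; apply: WN; rewrite ?mem_head.
rewrite inE => /predU1P[-> //|jr].
have iter_comm l : N j (iter l (N i) y) = iter l (N i) (N j y).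
  by elim: l => //= l IHl; rewrite N_comm IHl.
rewrite iter_comm Ny0 //; elim: k {Nky_neq0 NNky0 iter_comm} => //= k ->.
exact: N0.
Qed.

End CommonKernel.

Section MpolyIdeal.
Variables (K : comNzRingType) (n : nat) (W : {mpoly K[n]} -> Prop).
Hypotheses (W0 : W 0) (WD : forall F G, W F -> W G -> W (F + G))
  (WZ : forall c F, W F -> W (c *: F)) (WX : forall j F, W F -> W ('X_j * F)).

Lemma mpoly_ideal F p : W F -> W (p * F).
Proof.
move=> WF; elim/mpolyind: p => [|c m p _ _ Wp]; first by rewrite mul0r.
rewrite mulrDl -scalerAl; apply: WD => //; apply: WZ.
rewrite mpolyXE_id; elim: (index_enum _) => [|i r IH]; first by rewrite big_nil mul1r.
rewrite big_cons -mulrA; elim: (m i) => [|k IHk]; first by rewrite expr0 mul1r.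
by rewrite exprS -mulrA; apply: WX.
Qed.

End MpolyIdeal.

Definition gindex (x : gbasis) : int :=
  match x with GL m | GH m | GI m | GJ m => m end.

Lemma ord4P (j : 'I_4) : [\/ j = 0, j = 1, j = 2 | j = 3].
Proof.
by case: j => [[|[|[|[|k]]]] ltj]; [constructor 1|constructor 2|constructor 3|constructor 4|];
  try exact: val_inj.
Qed.

Section OmegaAction.
Variable R : realType.
Local Notation C := (R[i]).
Implicit Types (s t : 'I_4) (F : {mpoly C[4]}).

Definition jshift s t (m : nat) : {ffun 'I_4 -> C} :=
  [ffun i => if i == t then - m%:R else if i == s then 1 else 0].

Lemma shift_substE s t a b F :
  shift_subst s t a b F = mshift [ffun i => if i == t then b else if i == s then a else 0] F.
Proof.
rewrite /shift_subst /mshift; f_equal; apply: eq_from_tnth => i.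
rewrite !tnth_mktuple ffunE.
by case: (i == t); case: (i == s); rewrite ?mpolyC0 ?addr0.
Qed.

Lemma shift_subst0 s t F : shift_subst s t 0 0 F = F.
Proof.
rewrite shift_substE -[RHS]mshift0; f_equal; apply/ffunP => i.
by rewrite !ffunE; case: ifP => //; case: ifP.
Qed.

Lemma poly_seq_shift_subst s t a F : poly_seq (fun m => shift_subst s t a (- m%:R) F).
Proof.
apply: (@poly_seq_ext _ (fun m => mshift [ffun i =>
    if i == t then - m%:R else if i == s then a else 0] F)) => [m|].
  by rewrite shift_substE.
apply: poly_seq_mshift => i.
apply: (@poly_seq_ext _ (fun m => if i == t then - m%:R else if i == s then a else 0)).
  by move=> m; rewrite ffunE.
case: (i == t); last exact: poly_seq_const.
by apply: poly_seq_ext (poly_seq_natmul (-1)) => m; rewrite mulNrn.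
Qed.

Lemma jshift_unit s t : s != t ->
  [ffun i => (i == s)%:R] = jshift s t 0 /\ [ffun i => (i == t)%:R] = jshift s t 0 - jshift s t 1.
Proof.
move=> /negbTE st; split; apply/ffunP => i; rewrite !ffunE.
  have [->|_] := eqVneq i t; first by rewrite eq_sym st mulr0n oppr0.
  by case: (i == s).
have [_|_] := eqVneq i t; first by rewrite mulr0n oppr0 sub0r opprK.
by rewrite subrr.
Qed.

Lemma omega_act_on_scale s t lam eta sig x F :
  omega_act_on s t lam eta sig x F = lam ^ gindex x *: omega_act_on s t 1 eta sig x F.
Proof. by case: x => m; rewrite /= ?exp1rz ?scale1r ?mul1r ?scaler0 ?scalerA. Qed.

Lemma poly_seq_omega_act_on s t eta sig (k : int -> gbasis) F :
  k = GL \/ k = GH \/ k = GI \/ k = GJ ->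
  poly_seq (fun m : nat => omega_act_on s t 1 eta sig (k m) F).
Proof.
have poly_shift a := poly_seq_shift_subst s t a F.
move=> [|[|[|]]] ->.
- apply: (@poly_seq_ext _ (fun m : nat =>
    ('X_t + 'X_s *+ m + eta%:MP *+ m) * shift_subst s t 0 (- m%:R) F)) => [m|].
    by rewrite /= exp1rz scale1r -pmulrn scaler_nat mulr_natl mpolyCMn.
  apply/poly_seqM/poly_shift/poly_seqD/poly_seq_natmul.
  exact/poly_seqD/poly_seq_natmul/poly_seq_const.
- apply: (@poly_seq_ext _ (fun m : nat => 'X_s * shift_subst s t 0 (- m%:R) F)) => [m|].
    by rewrite /= exp1rz scale1r -pmulrn.
  exact/poly_seqM/poly_shift/poly_seq_const.
- exact: poly_seq_const.
- apply: (@poly_seq_ext _ (fun m : nat => sig *: shift_subst s t 1 (- m%:R) F)) => [m|].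
    by rewrite /= exp1rz mul1r -pmulrn.
  exact/(poly_seq_morph (scalerBr sig))/poly_shift.
Qed.

Lemma omega_act_on_GH0 s t eta sig F : omega_act_on s t 1 eta sig (GH 0) F = 'X_s * F.
Proof. by rewrite /= exp1rz scale1r mulr0z oppr0 shift_subst0. Qed.

Lemma omega_act_on_GL0 s t eta sig F : omega_act_on s t 1 eta sig (GL 0) F = 'X_t * F.
Proof.
by rewrite /= exp1rz scale1r !mulr0z mul0r scale0r mpolyC0 !addr0 oppr0 shift_subst0.
Qed.

Lemma omega_act_on_GJ s t eta sig (m : nat) F :
  omega_act_on s t 1 eta sig (GJ m) F = sig *: mshift (jshift s t m) F.
Proof. by rewrite /= exp1rz mul1r -pmulrn shift_substE. Qed.

End OmegaAction.
Arguments jshift {R}.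

Section TensorSubmodule.
Variable R : realType.
Local Notation C := (R[i]).
Variables (lam1 lam2 sig1 sig2 eta1 eta2 : C).
Hypotheses (lam1_neq0 : lam1 != 0) (lam2_neq0 : lam2 != 0) (lam12 : lam1 != lam2)
  (sig1_neq0 : sig1 != 0) (sig2_neq0 : sig2 != 0).
Variable W : {mpoly C[4]} -> Prop.
Hypothesis W_sub : is_submodule (tensor_Omega_act lam1 eta1 sig1 lam2 eta2 sig2) W.

Let W0 : W 0. Proof. by case: W_sub. Qed.
Let WD F G : W F -> W G -> W (F + G). Proof. by case: W_sub => _ WD _ _; apply: WD. Qed.
Let WZ c F : W F -> W (c *: F). Proof. by case: W_sub => _ _ WZ _; apply: WZ. Qed.

Lemma submodule_factor_stable (k : int -> gbasis) F (m : nat) :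
  k = GL \/ k = GH \/ k = GI \/ k = GJ -> W F ->
  W (omega_act_on 0 1 1 eta1 sig1 (k m) F) /\ W (omega_act_on 2 3 1 eta2 sig2 (k m) F).
Proof.
move=> k_gen WF.
have [] := exp_poly_sum_mem W0 WD WZ lam1_neq0 lam2_neq0 lam12
  (poly_seq_omega_act_on 0 1 eta1 sig1 F k_gen) (poly_seq_omega_act_on 2 3 eta2 sig2 F k_gen).
- move=> j; have gk : gindex (k j) = j by case: k_gen => [|[|[|]]] ->.
  case: W_sub => _ _ _ /(_ (k j) F WF).
  by rewrite /tensor_Omega_act !(omega_act_on_scale _ _ lam1, omega_act_on_scale _ _ lam2) gk.
- by move=> Wa Wb; split; [exact: Wa | exact: Wb].
Qed.

Lemma submodule_mulX j F : W F -> W ('X_j * F).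
Proof.
move=> WF.
have [WX0 WX2] := submodule_factor_stable 0 (or_intror (or_introl erefl)) WF.
have [WX1 WX3] := submodule_factor_stable 0 (or_introl erefl) WF.
move: WX0 WX1 WX2 WX3; rewrite !omega_act_on_GH0 !omega_act_on_GL0.
by case: (ord4P j) => ->.
Qed.

Lemma submodule_jshift m F : W F ->
  W (mshift (jshift 0 1 m) F) /\ W (mshift (jshift 2 3 m) F).
Proof.
move=> WF; have [] := submodule_factor_stable m (or_intror (or_intror (or_intror erefl))) WF.
rewrite !omega_act_on_GJ => WJ1 WJ2.
split; [have := WZ sig1^-1 WJ1 | have := WZ sig2^-1 WJ2];
  by rewrite scalerA mulVf ?scale1r.
Qed.

Lemma submodule_one : (exists F, W F /\ F != 0) -> W 1.
Proof.
move=> [F [WF F_neq0]].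
pose r : seq {ffun 'I_4 -> C} := [:: jshift 0 1 0; jshift 0 1 1; jshift 2 3 0; jshift 2 3 1].
have WN : {in r, forall c G, W G -> W (mshift c G - G)}.
  move=> c c_r G WG; apply: (subspaceB WD WZ _ WG).
  have [[? ?] [? ?]] := (submodule_jshift 0 WG, submodule_jshift 1 WG).
  by move: c_r; rewrite !inE => /or4P[]/eqP->.
have N0 c : mshift c 0 - 0 = 0 :> {mpoly C[4]} by rewrite subr0 /mshift comp_mpoly0.
have [G [WG G_neq0 G_fixed]] := @common_kernel _ W _ (fun c G => mshift c G - G)
  N0 (@mshift_sub_comm _ _) (@mshift_sub_nilpotent _ _) r F WN WF F_neq0.
have fixed c : c \in r -> mshift c G = G by move=> /G_fixed /subr0_eq.
have fixed_pair s t j : s != t -> jshift s t 0 \in r -> jshift s t 1 \in r ->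
    j \in [:: s; t] -> mshift [ffun i => (i == j)%:R] G = G.
  move=> st /fixed fix0 /fixed fix1; have [e_s e_t] := @jshift_unit R _ _ st.
  rewrite !inE => /orP[]/eqP->; first by rewrite e_s.
  by rewrite e_t; exact: mshift_fixedD fix0 (mshift_fixedN fix1).
have G_unit j : mshift [ffun i => (i == j)%:R] G = G.
  by case: (ord4P j) => ->; [apply: (fixed_pair 0 1) | apply: (fixed_pair 0 1)
    | apply: (fixed_pair 2 3) | apply: (fixed_pair 2 3)]; rewrite ?inE ?eqxx ?orbT.
have G_const := mshift_fixed_const G_unit; set c := G.@[_] in G_const.
have c_neq0 : c != 0 by apply: contraNneq G_neq0 => c0; rewrite G_const c0 mpolyC0.
suff -> : 1 = c^-1 *: G by apply: WZ.
by rewrite G_const -mul_mpolyC -mpolyCM mulVf ?mpolyC1.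
Qed.

Lemma submodule_full : (exists F, W F /\ F != 0) -> forall F, W F.
Proof.
move=> /submodule_one W1 F; rewrite -[F]mulr1.
exact: mpoly_ideal W0 WD WZ submodule_mulX _ _ W1.
Qed.

End TensorSubmodule.

Lemma tensor_Omega_irreducible (R : realType) (lam1 lam2 sig1 sig2 eta1 eta2 : R[i]) :
  lam1 != 0 -> lam2 != 0 -> sig1 != 0 -> sig2 != 0 -> lam1 != lam2 ->
  irreducible_module (tensor_Omega_act lam1 eta1 sig1 lam2 eta2 sig2).
Proof.
move=> lam1_neq0 lam2_neq0 sig1_neq0 sig2_neq0 lam12.
split; first by exists 1; rewrite oner_neq0.
exact: submodule_full.
Qed.

Section DiagonalSubmodule.
Variable R : realType.
Local Notation C := (R[i]).
Implicit Types (F : {mpoly C[4]}) (v w : 'I_4 -> C).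

Definition diag_sums v : C * C := (v 0 + v 2, v 1 + v 3).

Definition sum_invariant F := forall v w, diag_sums v = diag_sums w -> F.@[v] = F.@[w].

Lemma meval_shift_subst s t a b F v :
  (shift_subst s t a b F).@[v] =
  F.@[fun i => v i + (if i == t then b else if i == s then a else 0)].
Proof. by rewrite shift_substE meval_mshift; apply: meval_eq => i; rewrite ffunE. Qed.

Lemma diag_sums_shift s t a b v : (s, t) = (0, 1) \/ (s, t) = (2, 3) ->
  diag_sums (fun i => v i + (if i == t then b else if i == s then a else 0)) =
  (v 0 + v 2 + a, v 1 + v 3 + b).
Proof.
by case=> [[-> ->]|[-> ->]]; rewrite /diag_sums /= ?addr0 ?addrA // addrAC [_ + b + _]addrAC.
Qed.

Lemma sum_invariantD F G : sum_invariant F -> sum_invariant G -> sum_invariant (F + G).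
Proof. by move=> invF invG v w vw; rewrite !mevalD (invF v w) ?(invG v w). Qed.

Lemma sum_invariantM F G : sum_invariant F -> sum_invariant G -> sum_invariant (F * G).
Proof. by move=> invF invG v w vw; rewrite !mevalM (invF v w) ?(invG v w). Qed.

Lemma sum_invariantZ c F : sum_invariant F -> sum_invariant (c *: F).
Proof. by move=> invF v w vw; rewrite !mevalZ (invF v w). Qed.

Lemma sum_invariant_shift s t a b F : (s, t) = (0, 1) \/ (s, t) = (2, 3) ->
  sum_invariant F -> sum_invariant (shift_subst s t a b F).
Proof.
move=> st invF v w vw; rewrite !meval_shift_subst; apply: invF.
by rewrite !diag_sums_shift //; case: vw => -> ->.
Qed.

Lemma shift_subst_sum_invariant a b F : sum_invariant F ->
  shift_subst 2 3 a b F = shift_subst 0 1 a b F.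
Proof.
move=> invF; apply/eqP; rewrite -subr_eq0; apply/eqP/mpoly_nat_zeros_eq0 => k.
apply/eqP; rewrite mevalB subr_eq0; apply/eqP.
rewrite [LHS]meval_shift_subst [RHS]meval_shift_subst; apply: invF.
by rewrite [LHS]diag_sums_shift ?[RHS]diag_sums_shift; [| left | right].
Qed.

Lemma sum_invariant_act (lam eta1 sig1 eta2 sig2 : C) x F : sum_invariant F ->
  sum_invariant (tensor_Omega_act lam eta1 sig1 lam eta2 sig2 x F).
Proof.
move=> invF; have inv_shift a b : sum_invariant (shift_subst 0 1 a b F).
  by apply: sum_invariant_shift => //; left.
rewrite /tensor_Omega_act; case: x => m /=; rewrite ?(shift_subst_sum_invariant _ _ invF).
- rewrite -scalerDr -mulrDl; apply/sum_invariantZ/sum_invariantM => // v w [h02 h13].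
  rewrite !mevalD !mevalZ !mevalXU !mevalC.
  transitivity ((v 1 + v 3) + m%:~R * (v 0 + v 2) + m%:~R * (eta1 + eta2)); first by ring.
  by rewrite h02 h13; ring.
- rewrite -scalerDr -mulrDl; apply/sum_invariantZ/sum_invariantM => // v w [h02 h13].
  by rewrite !mevalD !mevalXU h02.
- by move=> v w; rewrite addr0 !meval0.
- by rewrite -scalerDl; apply: sum_invariantZ.
Qed.

Lemma tensor_Omega_reducible (lam eta1 sig1 eta2 sig2 : C) :
  ~ irreducible_module (tensor_Omega_act lam eta1 sig1 lam eta2 sig2).
Proof.
move=> [_ irr].
have sub : is_submodule (tensor_Omega_act lam eta1 sig1 lam eta2 sig2) sum_invariant.
  split=> [v w _|F G|c F|x F]; first by rewrite !meval0.
  - exact: sum_invariantD.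
  - exact: sum_invariantZ.
  - exact: sum_invariant_act.
have inv1 : sum_invariant 1 by move=> v w _; rewrite !meval1.
have /(_ (fun i => (i == 1)%:R) (fun i => (i == 3)%:R)) :=
  irr _ sub (ex_intro _ 1 (conj inv1 (oner_neq0 _))) 'X_1.
rewrite !mevalXU /diag_sums /= !addr0 !add0r => /(_ erefl) /eqP.
by rewrite oner_eq0.
Qed.

End DiagonalSubmodule.

Theorem theorem4p6 (R : realType) (lam1 lam2 sig1 sig2 eta1 eta2 : R[i]) :
  lam1 != 0 -> lam2 != 0 -> sig1 != 0 -> sig2 != 0 ->
  (irreducible_module (tensor_Omega_act lam1 eta1 sig1 lam2 eta2 sig2)
   <-> lam1 != lam2).
Proof.
move=> lam1_neq0 lam2_neq0 sig1_neq0 sig2_neq0; split; last exact: tensor_Omega_irreducible.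
by apply: contraPneq => <-; apply: tensor_Omega_reducible.
Qed.
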